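(* Let $G$ be a finite non-cyclic $p$-group having no subgroup isomorphic to a generalized quaternion group $Q_{2^n}$. Suppose that either (i) the derived subgroup $G'$ is non-cyclic, or (ii) there exists $g\in G$ with $o(g)>p$ and $\langle g\rangle\cap G'=\{e\}$. Then $E(\mathcal{P}_e(G))\subsetneq E(\Delta_D(G))$.
   Context: The enhanced power graph $\mathcal{P}_e(G)$ of a group $G$ has vertex set $G$, with distinct $x,y$ adjacent iff $\langle x,y\rangle$ is cyclic; $E(\cdot)$ denotes the edge set. For a finite group $G$ with Schur multiplier $M(G)$, a Schur cover is a group $\tilde G$ with central extension $\{e\}\to M(G)\xrightarrow{\iota}\tilde G\xrightarrow{\pi}G\to\{e\}$, $\iota(M(G))\subseteq Z(\tilde G)\cap[\tilde G,\tilde G]$, of maximal order. The deep commuting graph $\Delta_D(G)$ has vertex set $G$, distinct vertices adjacent iff their preimages under $\pi$ commute in $\tilde G$. $Q_{2^n}=\langle a,b\mid a^{2^{n-1}}=e,\ b^2=a^{2^{n-2}},\ ab=ba^{-1}\rangle$. *)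

From HB Require Import structures.
From mathcomp Require Import all_boot all_fingroup all_solvable.
Set Implicit Arguments.
Unset Strict Implicit.
Unset Printing Implicit Defensive.
Local Open Scope group_scope.

Definition no_gen_quaternion_subgroup (gT : finGroupType) (G : {group gT}) :=
  forall (n : nat) (H : {group gT}), 3 <= n -> H \subset G -> ~ (H \isog 'Q_(2 ^ n)).

(* Edge set of the enhanced power graph of G: unordered pairs {x,y} of
   distinct elements with <x,y> cyclic. *)
Definition epg_edges (gT : finGroupType) (G : {set gT}) : {set {set gT}} :=
  [set [set x; y] | x in G, y in G & (x != y) && cyclic <<[set x; y]>>].

Definition stem_extension (gT hT : finGroupType) (H : {group hT})
    (pi : {morphism H >-> gT}) (G : {group gT}) : bool :=
  (pi @* H == G) && ('ker pi \subset 'Z(H) :&: H^`(1)).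

Definition schur_cover (gT hT : finGroupType) (H : {group hT})
    (pi : {morphism H >-> gT}) (G : {group gT}) : Prop :=
  stem_extension pi G /\
  forall (kT : finGroupType) (K : {group kT}) (phi : {morphism K >-> gT}),
    stem_extension phi G -> #|K| <= #|H|.

Definition deep_adj (gT hT : finGroupType) (H : {group hT})
    (pi : {morphism H >-> gT}) (x y : gT) : bool :=
  [forall a in H, forall b in H, (pi a == x) && (pi b == y) ==> (a * b == b * a)].

Definition deep_edges (gT hT : finGroupType) (H : {group hT})
    (pi : {morphism H >-> gT}) (G : {set gT}) : {set {set gT}} :=
  [set [set x; y] | x in G, y in G & (x != y) && deep_adj pi x y].

(* The kernel of a Schur cover pi : H ->> G is central, so x, y in G are
   deep-adjacent as soon as some lifts of x and y commute; lifting a generator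
   of a cyclic <x, y> shows that every enhanced power edge is a deep edge.
   For strictness it suffices to find a deep-adjacent pair {x, z} with x a
   non-trivial p-element and z of order p outside <x>: then <x, z> has two
   subgroups of order p, so it is not cyclic.
   In case (i) take x of order p in G' :&: Z(G); as G' is neither cyclic nor
   generalized quaternion, Ohm_1(G') <> <x> provides z in G'.  Elements of G'
   lift to H', which centralizes every lift of a central element by the three
   subgroups lemma.
   In case (ii) take x = g^p and z of order p in Z(G) outside <g> (in
   G' :&: Z(G) if G' <> 1; otherwise G = Z(G) and Ohm_1(G) is larger than
   the subgroup of order p of <g>).
   For lifts a, c of g, z the commutator [a, c] lies in the central kernel,
   hence [a^p, c] = [a, c^p] = 1 since c^p is in the kernel. *)

From HB Require Import structures.
From mathcomp Require Import all_boot all_fingroup all_solvable.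
Set Implicit Arguments.
Unset Strict Implicit.
Unset Printing Implicit Defensive.
Local Open Scope group_scope.

Section OrderPElements.
Variables (gT : finGroupType) (p : nat).
Implicit Types (G K N C : {group gT}) (x y z : gT).

Lemma cyclic_cycle_eq_order C y z :
  cyclic C -> y \in C -> z \in C -> #[y] = #[z] -> <[y]> = <[z]>.
Proof.
move=> cycC Cy Cz oyz; apply/eqP.
by rewrite (eq_subG_cyclic cycC) ?cycle_subG // -!orderE oyz.
Qed.

Lemma noncyclic_order_p_notin_cycle x z :
  prime p -> p.-elt x -> x != 1 -> #[z] = p -> z \notin <[x]> ->
  ~~ cyclic <<[set x; z]>>.
Proof.
move=> pr px ntx oz; apply: contra => cycXZ.
rewrite -cycle_eq1 in ntx.
have [_ p_dv_x _] := pgroup_pdiv px ntx.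
have [y Xy oy] := Cauchy pr p_dv_x.
have Xxz : x \in <<[set x; z]>> by rewrite mem_gen // !inE eqxx.
have Zxz : z \in <<[set x; z]>> by rewrite mem_gen // !inE eqxx orbT.
have Yxz : y \in <<[set x; z]>> by rewrite (subsetP _ y Xy) // cycle_subG.
rewrite -cycle_subG -(cyclic_cycle_eq_order cycXZ Yxz Zxz) ?oy //.
by rewrite cycle_subG.
Qed.

Lemma no_gen_quaternion_subgroupS K G :
  K \subset G -> no_gen_quaternion_subgroup G -> no_gen_quaternion_subgroup K.
Proof. by move=> sKG nQG n L n_gt2 sLK; apply: nQG (subset_trans sLK sKG). Qed.

Lemma exists_order_p_notin_cycle K z :
  p.-group K -> ~~ cyclic K -> no_gen_quaternion_subgroup K ->
  z \in K -> #[z] = p -> exists2 x, x \in K & #[x] = p /\ x \notin <[z]>.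
Proof.
move=> pK ncK nQK Kz oz.
have ntK : K :!=: 1 by apply: contraNneq ncK => ->; exact: cyclic1.
have [pr _ _] := pgroup_pdiv pK ntK.
case: (boolP [exists x in K, (#[x] == p) && (x \notin <[z]>)]).
  by case/exists_inP=> x Kx /andP[/eqP ox zx]; exists x.
move/exists_inP=> noX.
have sOhm1z : 'Ohm_1(K) \subset <[z]>.
  rewrite (OhmE 1 pK) gen_subG; apply/subsetP => x.
  rewrite !inE expn1 => /andP[Kx xp1].
  have /(primeP pr).2/pred2P[|ox] : #[x] %| p by rewrite order_dvdn.
    by move/eqP; rewrite order_eq1 => /eqP->; exact: group1.
  by apply/negPn/negP => zx; apply: noX; exists x; rewrite // ox eqxx.
have Ohm1K : 'Ohm_1(K) = <[z]>.
  apply/eqP; rewrite eqEsubset sOhm1z cycle_subG /= (OhmE 1 pK) mem_gen //.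
  by rewrite !inE Kz expn1 -oz expg_order eqxx.
have /(prime_Ohm1P pK ntK) : #|'Ohm_1(K)| = p by rewrite Ohm1K -orderE.
rewrite (negbTE ncK) => /andP[_ /eqP/quaternion_classP[n n_gt2 isoQ]].
by case: (nQK n K n_gt2 (subxx _) isoQ).
Qed.

Lemma normal_center_order_p G N :
  p.-group G -> N <| G -> N :!=: 1 -> exists2 z, z \in N :&: 'Z(G) & #[z] = p.
Proof.
move=> pG nNG ntN.
have ntNZ : N :&: 'Z(G) != 1.
  by apply: contraNneq ntN => /(TI_center_nil (pgroup_nil pG) nNG)->.
have pNZ : p.-group (N :&: 'Z(G)).
  by apply: pgroupS pG; rewrite subIset // normal_sub.
have [pr p_dv_NZ _] := pgroup_pdiv pNZ ntNZ.
by have [z] := Cauchy pr p_dv_NZ; exists z.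
Qed.

Lemma center_order_p_notin_cycle G g :
  p.-group G -> ~~ cyclic G -> no_gen_quaternion_subgroup G ->
  g \in G -> g != 1 -> <[g]> :&: G^`(1) = 1 ->
  exists2 z, z \in 'Z(G) & #[z] = p /\ z \notin <[g]>.
Proof.
move=> pG ncG nQG Gg ntg tiGD.
have ntG : G :!=: 1 by apply/trivgPn; exists g.
have [pr _ _] := pgroup_pdiv pG ntG.
have [G'1 | ntG'] := eqVneq G^`(1) 1.
  have /center_idP-> : abelian G by apply/commG1P; rewrite -derg1 G'1.
  rewrite -cycle_eq1 in ntg.
  have [_ p_dv_g _] := pgroup_pdiv (mem_p_elt pG Gg) ntg.
  have [y gy oy] := Cauchy pr p_dv_g.
  have Gy : y \in G by rewrite (subsetP _ y gy) // cycle_subG.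
  have [z Gz [oz zy]] := exists_order_p_notin_cycle pG ncG nQG Gy oy.
  exists z => //; split=> //; apply: contra zy => gz.
  rewrite -(cyclic_cycle_eq_order (cycle_cyclic g) gz gy) ?cycle_id //.
  by rewrite oz oy.
have [z /setIP[G'z Zz] oz] := normal_center_order_p pG (der_normal 1 G) ntG'.
exists z => //; split=> //; apply/negP => gz.
have : z \in <[g]> :&: G^`(1) by rewrite inE gz G'z.
rewrite tiGD inE => /eqP z1.
by move: pr; rewrite -oz z1 order1.
Qed.

End OrderPElements.

Section StemExtension.
Variables (gT hT : finGroupType) (H : {group hT}) (G : {group gT}).
Variable pi : {morphism H >-> gT}.
Hypothesis stemH : stem_extension pi G.

Lemma morphim_stem : pi @* H = G.
Proof. by case/andP: stemH => /eqP. Qed.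

Lemma ker_stem_cent : 'ker pi \subset 'C(H).
Proof.
by case/andP: stemH => _ /subset_trans-> //; rewrite subIset // subsetIr.
Qed.

Lemma commute_ker_stem m u : m \in 'ker pi -> u \in H -> commute m u.
Proof. by move/(subsetP ker_stem_cent)/centP; apply. Qed.

Lemma deep_adj_morph a b :
  a \in H -> b \in H -> commute a b -> deep_adj pi (pi a) (pi b).
Proof.
move=> Ha Hb cab; apply/forall_inP => a' Ha'; apply/forall_inP => b' Hb'.
apply/implyP => /andP[/eqP/(rcoset_kerP pi Ha' Ha)/rcosetP[k Kk def_a']].
move=> /eqP/(rcoset_kerP pi Hb' Hb)/rcosetP[l Kl def_b'].
rewrite def_a' def_b' in Ha' *.
apply/eqP; apply: commuteM; first exact/commute_sym/commute_ker_stem.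
apply/commute_sym/commuteM; last exact/commute_sym.
exact/commute_sym/commute_ker_stem.
Qed.

Lemma deep_adj_cyclic x y :
  x \in G -> y \in G -> cyclic <<[set x; y]>> -> deep_adj pi x y.
Proof.
move=> Gx Gy /cyclicP[w def_xy].
have xy_w (u : gT) : u \in [set x; y] -> u \in <[w]>.
  by move=> xy_u; rewrite -def_xy mem_gen.
have Gw : w \in G.
  by rewrite -cycle_subG -def_xy gen_subG subUset !sub1set Gx Gy.
have /cycleP[i ->] := xy_w x (set21 x y).
have /cycleP[j ->] := xy_w y (set22 x y).
rewrite -morphim_stem in Gw; case/morphimP: Gw => c _ Hc ->.
rewrite -!morphX //; apply: deep_adj_morph; rewrite ?groupX //.
exact: commuteX2.
Qed.

Lemma epg_edges_sub_deep_edges : epg_edges G \subset deep_edges pi G.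
Proof.
apply/subsetP => _ /imset2P[x y Gx /setIdP[Gy /andP[neq_xy cyc_xy]] ->].
by apply/imset2P; exists x y; rewrite // inE Gy neq_xy deep_adj_cyclic.
Qed.

Lemma epg_edges_proper_deep_edges x z :
  x \in G -> z \in G -> deep_adj pi x z -> ~~ cyclic <<[set x; z]>> ->
  epg_edges G \proper deep_edges pi G.
Proof.
move=> Gx Gz dxz nc_xz; rewrite properE epg_edges_sub_deep_edges /=.
have neq_xz : x != z.
  by apply: contraNneq nc_xz => ->; rewrite setUid cycle_cyclic.
apply/subsetPn; exists [set x; z].
  by apply/imset2P; exists x z; rewrite // inE Gz neq_xz.
apply/imset2P => -[x' z' _ /setIdP[_ /andP[_ cyc_xz']] def_xz].
by rewrite def_xz cyc_xz' in nc_xz.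
Qed.

Lemma commg_ker_center a c :
  a \in H -> c \in H -> pi c \in 'Z(G) -> [~ a, c] \in 'ker pi.
Proof.
move=> Ha Hc /centerP[_ cGc]; rewrite !inE groupR //= morphR //.
by apply/commgP/commute_sym/cGc; rewrite -morphim_stem mem_morphim.
Qed.

Lemma commute_expg_center a c q :
  a \in H -> c \in H -> pi c \in 'Z(G) -> pi c ^+ q = 1 -> commute (a ^+ q) c.
Proof.
move=> Ha Hc Zc cq1.
have a_ac : commute a [~ a, c].
  exact/commute_sym/commute_ker_stem/Ha/commg_ker_center.
have c_ac : commute c [~ a, c].
  exact/commute_sym/commute_ker_stem/Hc/commg_ker_center.
have Kcq : c ^+ q \in 'ker pi by rewrite !inE groupX //= morphX // cq1.
apply/commgP; rewrite commXg // -commgX //.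
by apply/commgP/commute_sym/commute_ker_stem.
Qed.

Lemma commute_der_center a c :
  a \in H^`(1) -> c \in H -> pi c \in 'Z(G) -> commute a c.
Proof.
move=> H'a Hc Zc.
have cH_Hc : [~: H, <[c]>] \subset 'C(H).
  have sCH : <[c]> \subset H by rewrite cycle_subG.
  apply: subset_trans ker_stem_cent.
  rewrite ker_trivg_morphim commg_subl (subset_trans sCH) ?normG //=.
  rewrite morphimR // morphim_stem morphim_cycle // subG1; apply/eqP/commG1P.
  by rewrite cent_cycle sub_cent1; case/setIP: Zc.
have : [~: H, H] \subset 'C(<[c]>).
  by apply/commG1P/three_subgroup; apply/commG1P; rewrite // commGC.
by rewrite -derg1 cent_cycle => /subsetP/(_ a H'a)/cent1P.
Qed.

Variable p : nat.
Hypotheses (p_pr : prime p) (pG : p.-group G).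
Hypothesis nQG : no_gen_quaternion_subgroup G.

Lemma epg_edges_proper_deep_edges_noncyclic_der :
  ~~ cyclic G^`(1) -> epg_edges G \proper deep_edges pi G.
Proof.
move=> ncG'; have sG'G := der_sub 1 G.
have ntG' : G^`(1) != 1 by apply: contraNneq ncG' => ->; exact: cyclic1.
have [z /setIP[G'z Zz] oz] := normal_center_order_p pG (der_normal 1 G) ntG'.
have [x G'x [ox xz]] := exists_order_p_notin_cycle (pgroupS sG'G pG) ncG'
  (no_gen_quaternion_subgroupS sG'G nQG) G'z oz.
have Gz := subsetP sG'G z G'z.
apply: (@epg_edges_proper_deep_edges z x); rewrite ?(subsetP sG'G) //.
  have /morphimP[c _ Hc def_z] : z \in pi @* H by rewrite morphim_stem.
  have /morphimP[a _ H'a ->] : x \in pi @* H^`(1).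
    by rewrite morphim_der // morphim_stem.
  have Ha := subsetP (der_sub 1 H) a H'a.
  rewrite def_z; apply: deep_adj_morph => //.
  by apply/commute_sym/(commute_der_center H'a Hc); rewrite -def_z.
apply: noncyclic_order_p_notin_cycle (mem_p_elt pG Gz) _ ox xz => //.
by rewrite -order_gt1 oz prime_gt1.
Qed.

Lemma epg_edges_proper_deep_edges_cycle_TI_der g :
  ~~ cyclic G -> g \in G -> p < #[g] -> <[g]> :&: G^`(1) = 1 ->
  epg_edges G \proper deep_edges pi G.
Proof.
move=> ncG Gg p_lt_g tiG'.
have ntg : g != 1.
  by apply: contraTneq p_lt_g => ->; rewrite order1 -leqNgt prime_gt0.
have [z Zz [oz zg]] := center_order_p_notin_cycle pG ncG nQG Gg ntg tiG'.
have Gz := subsetP (center_sub G) z Zz.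
apply: (@epg_edges_proper_deep_edges (g ^+ p) z); rewrite ?groupX //.
  have /morphimP[a _ Ha ->] : g \in pi @* H by rewrite morphim_stem.
  have /morphimP[c _ Hc def_z] : z \in pi @* H by rewrite morphim_stem.
  rewrite def_z -morphX //; apply: deep_adj_morph; rewrite ?groupX //.
  by apply: commute_expg_center; rewrite -?def_z // -oz expg_order.
apply: noncyclic_order_p_notin_cycle (mem_p_elt pG (groupX p Gg)) _ oz _ => //.
  apply: contraTneq p_lt_g => /eqP; rewrite -order_dvdn -leqNgt.
  exact: dvdn_leq (prime_gt0 p_pr).
by apply: contra zg => /(subsetP _ z); apply; rewrite cycle_subG mem_cycle.
Qed.

End StemExtension.

Theorem proposition3p14 (gT : finGroupType) (G : {group gT}) (p : nat) :
  prime p -> p.-group G -> ~~ cyclic G ->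
  no_gen_quaternion_subgroup G ->
  (~~ cyclic G^`(1) \/
   exists2 g, g \in G & (p < #[g])%N /\ <[g]> :&: G^`(1) = 1) ->
  forall (hT : finGroupType) (H : {group hT}) (pi : {morphism H >-> gT}),
    schur_cover pi G ->
    epg_edges G \proper deep_edges pi G.
Proof.
move=> p_pr pG ncG nQG [ncG' | [g Gg [p_lt_g tiG']]] hT H pi [stemH _].
  exact: (epg_edges_proper_deep_edges_noncyclic_der stemH p_pr pG nQG ncG').
exact: (epg_edges_proper_deep_edges_cycle_TI_der stemH p_pr pG nQG
  ncG Gg p_lt_g tiG').
Qed.
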